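(* The Lie subalgebra $\Lambda_1(\mathbb{Q}\mathrm{Tree}_2)=\bigoplus_{m\ge2}\mathbb{Q}\mathrm{Tree}_2((m))$ of $\Lambda(\mathbb{Q}\mathrm{Tree}_2^-)$ is not finitely generated.
   Context: $\mathrm{Tree}_2((m))$, $m\ge1$, is the set of planar binary rooted trees with one root and $m$ leaves labeled $1,\dots,m$ from left to right, equivalently full parenthesizations of $12\cdots m$; $\mathrm{Tree}_2((1))=\{1\}$. Composition $S\circ_iT$ grafts the root of $T$ onto the $i$-th leaf of $S$. The operad $\mathrm{Tree}_2^-$ has $\mathrm{Tree}_2^-((0))=\{\circ\}$, $\mathrm{Tree}_2^-((m))=\mathrm{Tree}_2((m))$ for $m\ge1$, and $c\circ_i\circ=\partial_ic$, where $\partial_ic$ erases the $i$-th leaf of $c$ (and $\partial_1 1=\circ$). For a nonsymmetric operad of sets $\mathcal{C}$, $\Lambda(\mathbb{Q}\mathcal{C})=\bigoplus_{m\ge0}\mathbb{Q}\mathcal{C}((m))$ with bracket $[c,d]=\sum_{t=1}^{j}d\circ_tc-\sum_{s=1}^{k}c\circ_sd$ for $c\in\mathcal{C}((k))$, $d\in\mathcal{C}((j))$. *)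

From HB Require Import structures.
From mathcomp Require Import all_boot all_order all_algebra.
Set Implicit Arguments. Unset Strict Implicit. Unset Printing Implicit Defensive.
Import GRing.Theory.
Local Open Scope ring_scope.

(** Planar binary rooted trees; leaves are numbered 1..m from left to right. *)
Inductive tree : Type := Leaf | Node of tree & tree.

Fixpoint tree_eqb (s t : tree) : bool :=
  match s, t with
  | Leaf, Leaf => true
  | Node l r, Node l' r' => tree_eqb l l' && tree_eqb r r'
  | _, _ => false
  end.

Lemma tree_eqP : Equality.axiom tree_eqb.
Proof.
elim=> [|l IHl r IHr] [|l' r'] /=; try by constructor.
by apply: (iffP andP) => [[/IHl -> /IHr ->]|[<- <-]]; split; [apply/IHl|apply/IHr].
Qed.

HB.instance Definition _ := hasDecEq.Build tree tree_eqP.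

Fixpoint leaves (t : tree) : nat :=
  match t with Leaf => 1%N | Node l r => (leaves l + leaves r)%N end.

(** Elements of the operad Tree_2^- : [None] is the arity-0 element (circ),
    [Some t] is the tree t of arity [leaves t] (>= 1). *)
Definition optree := option tree.

Definition arity (c : optree) : nat :=
  match c with None => 0%N | Some t => leaves t end.

(** S o_i T : graft the root of T onto the i-th leaf (1-indexed) of S. *)
Fixpoint graft (s : tree) (i : nat) (t : tree) : tree :=
  match s with
  | Leaf => if i == 1%N then t else Leaf
  | Node l r => if (i <= leaves l)%N then Node (graft l i t) r
                else Node l (graft r (i - leaves l) t)
  end.

(** partial_i c : erase the i-th leaf of c (partial_1 1 = circ). *)
Fixpoint erase (s : tree) (i : nat) : optree :=
  match s with
  | Leaf => if i == 1%N then None else Some Leaf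
  | Node l r =>
      if (i <= leaves l)%N then
        match erase l i with None => Some r | Some l' => Some (Node l' r) end
      else
        match erase r (i - leaves l) with None => Some l | Some r' => Some (Node l r') end
  end.

(** Operadic composition c o_i d in Tree_2^- (only meaningful for 1 <= i <= arity c). *)
Definition comp (c : optree) (i : nat) (d : optree) : optree :=
  match c, d with
  | Some s, Some t => Some (graft s i t)
  | Some s, None => erase s i
  | None, _ => None
  end.

(** Elements of Lambda(Q Tree_2^-) as formal finite Q-linear combinations. *)
Definition vec := seq (rat * optree).

Definition coef (v : vec) (x : optree) : rat :=
  \sum_(p <- v | p.2 == x) p.1.

(** bracket of basis elements c (arity k), d (arity j):
    [c,d] = sum_{t=1}^j d o_t c - sum_{s=1}^k c o_s d *)
Definition brb (c d : optree) : vec :=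
  [seq (1, comp d t c) | t <- iota 1 (arity d)] ++
  [seq (-1, comp c s d) | s <- iota 1 (arity c)].

Definition bracket (u v : vec) : vec :=
  flatten [seq [seq (p.1 * q.1 * r.1, r.2) | r <- brb p.2 q.2] | p <- u, q <- v].

Definition vscale (a : rat) (v : vec) : vec := [seq (a * p.1, p.2) | p <- v].

Definition in_Lambda1 (v : vec) : Prop :=
  forall x, coef v x != 0 -> (2 <= arity x)%N.

(** the Lie subalgebra of Lambda(Q Tree_2^-) generated by the set S
    (vectors are identified when they have the same coefficients) *)
Inductive gen (S : seq vec) : vec -> Prop :=
  | gen_in v : v \in S -> gen S v
  | gen_zero : gen S [::]
  | gen_add u v : gen S u -> gen S v -> gen S (u ++ v)
  | gen_scale a v : gen S v -> gen S (vscale a v)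
  | gen_bracket u v : gen S u -> gen S v -> gen S (bracket u v)
  | gen_ext u v : gen S u -> (forall x, coef u x = coef v x) -> gen S v.

From Pilot Require Import Defs.
From mathcomp Require Import all_boot all_order all_algebra.
From mathcomp Require Import zify.
Set Implicit Arguments. Unset Strict Implicit. Unset Printing Implicit Defensive.
Import GRing.Theory.

(** Right combs are indecomposable.  Grafting a tree [c] with at least two
    leaves onto leaf [t] of [d] yields a right comb only when [c] and [d] are
    right combs and [t] is the last leaf of [d].  Hence in [[c,d]] the right
    comb [d o_last c] occurs with sign [+] and [c o_last d] with sign [-], and
    these are the same comb.  So brackets of elements of [Lambda_1] have zero
    coefficient on every right comb, and the Lie algebra generated by finitely
    many elements of [Lambda_1] misses every right comb of arity larger than
    the arities occurring in the generators. *)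

Fixpoint rcomb (n : nat) : tree :=
  if n is n'.+1 then Node Leaf (rcomb n') else Leaf.

Fixpoint is_rcomb (t : tree) : bool :=
  match t with Leaf => true | Node l r => (l == Leaf) && is_rcomb r end.

Lemma leaves_gt0 t : (0 < leaves t)%N.
Proof. by elim: t => //= l IHl r _; rewrite addn_gt0 IHl. Qed.

Lemma leaves_rcomb n : leaves (rcomb n) = n.+1.
Proof. by elim: n => //= n ->. Qed.

Lemma rcombP n : is_rcomb (rcomb n).
Proof. by elim: n. Qed.

Lemma eq_rcombE x n : (x == rcomb n) = is_rcomb x && (leaves x == n.+1).
Proof.
elim: x n => [|l _ r IHr] [|n] //=.
  have l_gt0 := leaves_gt0 l; have r_gt0 := leaves_gt0 r.
  have -> : (leaves l + leaves r == 1)%N = false by lia.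
  by rewrite andbF.
apply/eqP/andP => [[-> ->]|[/andP[/eqP -> rc_r] /eqP /= lr]].
  by rewrite rcombP leaves_rcomb.
by congr Node; apply/eqP; rewrite IHr rc_r /=; apply/eqP; lia.
Qed.

Lemma leaves_graft s i t : (1 <= i <= leaves s)%N ->
  leaves (graft s i t) = (leaves s + leaves t).-1.
Proof.
elim: s i => [|l IHl r IHr] i /= Hi; first by have -> : i = 1%N by lia.
have := leaves_gt0 l; have := leaves_gt0 r; have := leaves_gt0 t.
by case: ifP => Hil /=; [rewrite IHl|rewrite IHr]; lia.
Qed.

Lemma is_rcomb_graft s i t : (1 <= i <= leaves s)%N -> (2 <= leaves t)%N ->
  is_rcomb (graft s i t) = [&& is_rcomb s, is_rcomb t & i == leaves s].
Proof.
elim: s i => [|l _ r IHr] i /= Hi Ht.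
  have -> : i = 1%N by lia.
  by rewrite andbT.
have r_gt0 := leaves_gt0 r; case: ifP => Hil /=.
  have -> : (graft l i t == Leaf) = false.
    apply/negbTE/eqP => gLeaf; have Hi' : (1 <= i <= leaves l)%N by lia.
    by move: (leaves_graft t Hi'); rewrite gLeaf /=; lia.
  have -> : (i == leaves l + leaves r) = false by lia.
  by rewrite !andbF.
rewrite IHr; [|lia|done].
have -> : (i - leaves l == leaves r) = (i == leaves l + leaves r) by lia.
by rewrite andbA.
Qed.

Lemma count_graft_rcomb d c n : (2 <= leaves c)%N ->
  count (fun i => graft d i c == rcomb n) (iota 1 (leaves d)) =
  [&& is_rcomb d, is_rcomb c & (leaves d + leaves c).-1 == n.+1].
Proof.
move=> Hc; set K := [&& is_rcomb d, _ & _].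
rewrite (@eq_in_count _ _ (fun i => K && (i == leaves d))); last first.
  move=> i; rewrite mem_iota => Hi.
  have Hi' : (1 <= i <= leaves d)%N by lia.
  rewrite eq_rcombE is_rcomb_graft // leaves_graft // /K.
  by case: (is_rcomb d) (is_rcomb c) (i == leaves d) (_.-1 == _) => [] [] [] [].
case: K => /=; last by rewrite count_pred0.
rewrite (count_uniq_mem _ (iota_uniq _ _)) mem_iota.
by rewrite leaves_gt0 ltnSn.
Qed.

Local Open Scope ring_scope.

Lemma coef_nil x : coef [::] x = 0.
Proof. by rewrite /coef big_nil. Qed.

Lemma coef_cons p v x : coef (p :: v) x = (if p.2 == x then p.1 else 0) + coef v x.
Proof. by rewrite /coef big_cons; case: ifP; rewrite ?add0r. Qed.

Lemma coef_cat u v x : coef (u ++ v) x = coef u x + coef v x.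
Proof. by rewrite /coef big_cat. Qed.

Lemma coef_scale a v x : coef (vscale a v) x = a * coef v x.
Proof. by rewrite /coef big_map big_distrr. Qed.

Lemma coef_map_const (a : rat) (f : nat -> optree) (s : seq nat) x :
  coef [seq (a, f t) | t <- s] x = a * (count (fun t => f t == x) s)%:R.
Proof.
elim: s => [|t s IH] /=; first by rewrite coef_nil mulr0.
by rewrite coef_cons IH; case: (f t == x); rewrite ?add0r // natrD mulrDr mulr1.
Qed.

Lemma coef_eq0_arity v x :
  (forall p, p \in v -> (arity p.2 < arity x)%N) -> coef v x = 0.
Proof.
move=> small; rewrite /coef big1_seq // => p /andP[/eqP px /small].
by rewrite px ltnn.
Qed.

Lemma sum_vec_coef (u : vec) (F : optree -> rat) :
  \sum_(p <- u) p.1 * F p.2 = \sum_(a <- undup (map snd u)) coef u a * F a.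
Proof.
under [RHS]eq_bigr => a _ do
  rewrite /coef big_distrl (eq_bigr (fun p => p.1 * F p.2)) => [|p /eqP <- //].
rewrite (exchange_big_dep predT) //=; apply: eq_big_seq => p pu.
rewrite -big_filter (@eq_filter _ _ (pred1 p.2)) => [|a]; last exact: eq_sym.
by rewrite filter_pred1_uniq ?undup_uniq ?mem_undup ?map_f // big_seq1.
Qed.

Lemma sum_vec_eq0 (u : vec) (F : optree -> rat) :
  (forall a, coef u a != 0 -> F a = 0) -> \sum_(p <- u) p.1 * F p.2 = 0.
Proof.
move=> F0; rewrite sum_vec_coef big1 // => a _.
by have [->|/F0 ->] := eqVneq (coef u a) 0; rewrite ?mul0r ?mulr0.
Qed.

Lemma coef_bracket u v x :
  coef (bracket u v) x =
  \sum_(p <- u) p.1 * \sum_(q <- v) q.1 * coef (brb p.2 q.2) x.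
Proof.
rewrite /coef /bracket big_flatten big_allpairs_dep; apply: eq_bigr => p _.
rewrite big_distrr; apply: eq_bigr => q _.
by rewrite big_map /= mulrA big_distrr.
Qed.

Lemma coef_brb a b x :
  coef (brb a b) x =
  (count (fun t => Defs.comp b t a == x) (iota 1 (arity b)))%:R -
  (count (fun s => Defs.comp a s b == x) (iota 1 (arity a)))%:R.
Proof. by rewrite /brb coef_cat !coef_map_const mul1r mulN1r. Qed.

Lemma coef_brb_low_arity a b x :
  (2 <= arity a)%N -> (2 <= arity b)%N -> (arity x < 2)%N ->
  coef (brb a b) x = 0.
Proof.
case: a b => [s|] // [t|] //= Hs Ht Hx; rewrite coef_brb.
have no_graft d c : (2 <= leaves d)%N -> (2 <= leaves c)%N ->
    count (fun i => Some (graft d i c) == x) (iota 1 (leaves d)) = 0%N.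
  move=> Hd Hc; apply/eqP; rewrite -leqn0 leqNgt -has_count; apply/hasP.
  move=> [i]; rewrite mem_iota => Hi /eqP gx; move: Hx.
  by rewrite -gx /= leaves_graft; lia.
by rewrite !no_graft // subrr.
Qed.

Lemma coef_brb_rcomb a b n : (2 <= arity a)%N -> (2 <= arity b)%N ->
  coef (brb a b) (Some (rcomb n)) = 0.
Proof.
case: a b => [s|] // [t|] //= Hs Ht; rewrite coef_brb.
have count_Some d c : count (fun i => Some (graft d i c) == Some (rcomb n))
    (iota 1 (leaves d)) = count (fun i => graft d i c == rcomb n)
    (iota 1 (leaves d)) by [].
by rewrite !count_Some !count_graft_rcomb // addnC andbCA subrr.
Qed.

Lemma coef_bracket_eq0 u v x : in_Lambda1 u -> in_Lambda1 v ->
  (forall a b, (2 <= arity a)%N -> (2 <= arity b)%N -> coef (brb a b) x = 0) ->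
  coef (bracket u v) x = 0.
Proof.
move=> Hu Hv brb0; rewrite coef_bracket.
apply: (sum_vec_eq0 (F := fun a => \sum_(q <- v) q.1 * coef (brb a q.2) x)).
move=> a /Hu Ha; apply: (sum_vec_eq0 (F := fun b => coef (brb a b) x)).
by move=> b /Hv; apply: brb0.
Qed.

Lemma in_Lambda1_nil : in_Lambda1 [::].
Proof. by move=> x; rewrite coef_nil eqxx. Qed.

Lemma in_Lambda1_cat u v : in_Lambda1 u -> in_Lambda1 v -> in_Lambda1 (u ++ v).
Proof.
move=> Hu Hv x; rewrite coef_cat.
by have [->|/Hu //] := eqVneq (coef u x) 0; rewrite add0r => /Hv.
Qed.

Lemma in_Lambda1_scale a v : in_Lambda1 v -> in_Lambda1 (vscale a v).
Proof.
move=> Hv x; rewrite coef_scale.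
by have [->|/Hv //] := eqVneq (coef v x) 0; rewrite mulr0 eqxx.
Qed.

Lemma in_Lambda1_bracket u v :
  in_Lambda1 u -> in_Lambda1 v -> in_Lambda1 (bracket u v).
Proof.
move=> Hu Hv x; rewrite leqNgt; apply: contra => Hx.
by rewrite (coef_bracket_eq0 Hu Hv) // => a b Ha Hb; apply: coef_brb_low_arity.
Qed.

Lemma coef_bracket_rcomb u v n : in_Lambda1 u -> in_Lambda1 v ->
  coef (bracket u v) (Some (rcomb n)) = 0.
Proof. by move=> Hu Hv; apply: coef_bracket_eq0 => // a b; apply: coef_brb_rcomb. Qed.

Lemma gen_rcomb_free (S : seq vec) n v :
  (forall s, s \in S -> in_Lambda1 s /\ coef s (Some (rcomb n)) = 0) ->
  gen S v -> in_Lambda1 v /\ coef v (Some (rcomb n)) = 0.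
Proof.
move=> HS; elim=> {v} [v /HS //| |u v _ [Hu cu] _ [Hv cv]|a v _ [Hv cv]
  |u v _ [Hu _] _ [Hv _]|u v _ [Hu cu] uv].
- by rewrite coef_nil; split; [exact: in_Lambda1_nil|].
- by rewrite coef_cat cu cv addr0; split; [exact: in_Lambda1_cat|].
- by rewrite coef_scale cv mulr0; split; [exact: in_Lambda1_scale|].
- by split; [exact: in_Lambda1_bracket|exact: coef_bracket_rcomb].
- by rewrite -uv; split=> // x; rewrite -uv => /Hu.
Qed.

Theorem corollary5p3 :
  ~ exists S : seq vec,
      (forall s, s \in S -> in_Lambda1 s) /\
      (forall v, in_Lambda1 v -> gen S v).
Proof.
move=> [S [HS Hgen]].
pose N := (\max_(s <- S) \max_(p <- s) arity p.2)%N.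
pose X : optree := Some (rcomb N.+1).
have arityX : arity X = N.+2 by rewrite /= leaves_rcomb.
have S_free s : s \in S -> in_Lambda1 s /\ coef s X = 0.
  move=> sS; split; first exact: HS.
  apply: coef_eq0_arity => p ps; rewrite arityX ltnS leqW //.
  apply: leq_trans (@leq_bigmax_seq _ S predT _ s sS isT).
  exact: (@leq_bigmax_seq _ s predT (fun p => arity p.2) p ps isT).
have X_Lambda1 : in_Lambda1 [:: (1, X)].
  move=> x; rewrite coef_cons coef_nil addr0.
  by case: (eqVneq X x) => [<- _|_ ]; [rewrite arityX | rewrite eqxx].
have [_] := gen_rcomb_free S_free (Hgen _ X_Lambda1).
by rewrite coef_cons coef_nil addr0 eqxx.
Qed.
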